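(* Let $\Lambda$ be a row-finite $k$-graph with no sources and let $v\in\Lambda^0$. If $y$ belongs to the saturation of the set $\{x\in\Lambda^0: v\le x\}$, then there exists $z\in\Lambda^0$ such that $v\le z$ and $y\le z$.
   Context: A $k$-graph is a countable category $\Lambda$ with a functor $d:\Lambda\to\mathbb{N}^k$ satisfying the factorization property: whenever $d(\lambda)=m+n$ there are unique $\mu,\nu$ with $\lambda=\mu\nu$, $d(\mu)=m$, $d(\nu)=n$. $\Lambda^n=d^{-1}(n)$, $\Lambda^0$ is the set of vertices, $r,s$ are range and source; $v\Lambda^n=\{\lambda: r(\lambda)=v,d(\lambda)=n\}$, $v\Lambda w=\{\lambda:r(\lambda)=v,s(\lambda)=w\}$. Row-finite: each $v\Lambda^n$ finite; no sources: $v\Lambda^{e_i}\ne\emptyset$ for all $v$, $i$ ($e_1,\dots,e_k$ the standard generators of $\mathbb{N}^k$). For vertices, $v\le w$ means $v\Lambda w\neq\emptyset$. A set $H\subseteq\Lambda^0$ is saturated if for every $v\in\Lambda^0$: if $r^{-1}(v)\neq\emptyset$ and $\{s(\lambda):\lambda\in v\Lambda^{e_i}\}\subseteq H$ for some $i\in\{1,\dots,k\}$ then $v\in H$. The saturation of a set is the smallest saturated subset of $\Lambda^0$ containing it. *)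

From Stdlib Require List.
From mathcomp Require Import all_boot.
Set Implicit Arguments. Unset Strict Implicit. Unset Printing Implicit Defensive.

(* Degrees: elements of N^k, represented as functions 'I_k -> nat,
   compared pointwise. *)
Definition deg (k : nat) := 'I_k -> nat.
Definition deg_eq k (m n : deg k) : Prop := forall i, m i = n i.
Definition deg_add k (m n : deg k) : deg k := fun i => m i + n i.
Definition deg_zero (k : nat) : deg k := fun _ => 0.
Definition deg_e (k : nat) (i : 'I_k) : deg k := fun j => nat_of_bool (j == i).

(* A k-graph: a countable category (objects Obj, morphisms Mor, range = codomain,
   source = domain, composition comp mu nu defined when src mu = rng nu)
   together with a degree functor d : Lambda -> N^k with the unique
   factorization property. comp is total, but only its values on composable
   pairs are constrained. *)
Record kgraph (k : nat) := KGraph {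
  Obj : Type;
  Mor : Type;
  src : Mor -> Obj;
  rng : Mor -> Obj;
  idm : Obj -> Mor;
  comp : Mor -> Mor -> Mor;
  dg : Mor -> deg k;
  Mor_countable : exists f : Mor -> nat, injective f;
  src_idm : forall v, src (idm v) = v;
  rng_idm : forall v, rng (idm v) = v;
  src_comp : forall mu nu, src mu = rng nu -> src (comp mu nu) = src nu;
  rng_comp : forall mu nu, src mu = rng nu -> rng (comp mu nu) = rng mu;
  comp_idl : forall mu, comp (idm (rng mu)) mu = mu;
  comp_idr : forall mu, comp mu (idm (src mu)) = mu;
  compA : forall la mu nu, src la = rng mu -> src mu = rng nu ->
      comp la (comp mu nu) = comp (comp la mu) nu;
  dg_idm : forall v, deg_eq (dg (idm v)) (@deg_zero k);
  dg_comp : forall mu nu, src mu = rng nu ->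
      deg_eq (dg (comp mu nu)) (deg_add (dg mu) (dg nu));
  factorization : forall la (m n : deg k), deg_eq (dg la) (deg_add m n) ->
      (exists mu nu, src mu = rng nu /\ la = comp mu nu /\
                     deg_eq (dg mu) m /\ deg_eq (dg nu) n) /\
      (forall mu nu mu' nu',
          src mu = rng nu -> la = comp mu nu -> deg_eq (dg mu) m -> deg_eq (dg nu) n ->
          src mu' = rng nu' -> la = comp mu' nu' -> deg_eq (dg mu') m -> deg_eq (dg nu') n ->
          mu = mu' /\ nu = nu')
}.

Arguments src {k} _ _.
Arguments rng {k} _ _.
Arguments dg {k} _ _.

Section Props.
Variables (k : nat) (L : kgraph k).

Definition row_finite : Prop :=
  forall (v : Obj L) (n : deg k), exists s : seq (Mor L),
    forall la, rng L la = v -> deg_eq (dg L la) n -> List.In la s.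

Definition no_sources : Prop :=
  forall (v : Obj L) (i : 'I_k), exists la, rng L la = v /\ deg_eq (dg L la) (@deg_e k i).

Definition vle (v w : Obj L) : Prop := exists la, rng L la = v /\ src L la = w.

Definition saturated (H : Obj L -> Prop) : Prop :=
  forall v : Obj L, (exists la, rng L la = v) ->
    (exists i : 'I_k, forall la, rng L la = v -> deg_eq (dg L la) (@deg_e k i) -> H (src L la)) ->
    H v.

Definition saturation (S : Obj L -> Prop) (y : Obj L) : Prop :=
  forall H, saturated H -> (forall x, S x -> H x) -> H y.
End Props.

(** If every [e_i]-edge with range [w] has its source below some [z] with
    [P z], then so is [w]: with no sources at least one such edge exists,
    and composing it with the path to [z] gives a path from [w].  So the
    vertices sharing an upper bound with [v] form a saturated set containing
    every [x] with [v <= x], hence containing the whole saturation. *)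

From Pilot Require Import Defs.
From mathcomp Require Import all_boot.

Set Implicit Arguments.
Unset Strict Implicit.

Section VertexOrder.
Variables (k : nat) (L : kgraph k).

Lemma vle_refl (x : Obj L) : vle x x.
Proof. by exists (idm x); rewrite rng_idm src_idm. Qed.

Lemma vle_trans (x y z : Obj L) : vle x y -> vle y z -> vle x z.
Proof.
move=> [la [<- <-]] [mu [hmu <-]].
by exists (Defs.comp la mu); rewrite rng_comp ?src_comp // hmu.
Qed.

Definition below_some (P : Obj L -> Prop) (x : Obj L) : Prop :=
  exists z, P z /\ vle x z.

Lemma below_some_saturated (P : Obj L -> Prop) :
  no_sources L -> saturated (below_some P).
Proof.
move=> hns w _ [i hedges].
have [la [hla hdla]] := hns w i.
have [z [hPz hsz]] := hedges la hla hdla.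
exists z; split => //.
by apply: vle_trans hsz; exists la.
Qed.

End VertexOrder.

Theorem lemma2p14 (k : nat) (L : kgraph k) (v y : Obj L) :
  row_finite L -> no_sources L ->
  saturation (fun x => vle v x) y ->
  exists z : Obj L, vle v z /\ vle y z.
Proof.
move=> _ hns hsat.
apply: (hsat (below_some (vle v)) (below_some_saturated hns)).
by move=> x hvx; exists x; split; last exact: vle_refl.
Qed.
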